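(* Let $S\subseteq(0,1)$ be open, $f:S\to(0,1)$ differentiable, and consider a (possibly randomized) Bernoulli factory for $f$ that is fast. For $n\in\mathbb N$ let $\varphi_{n,1}(p)=\Pr[N=n,\ Y=1]$ when the inputs have parameter $p$. Then each $\varphi_{n,1}$ is differentiable on $S$ and the series $\sum_{n=1}^\infty \partial\varphi_{n,1}(p)/\partial p$ converges uniformly on every closed interval $[\zeta,\eta]\subseteq S$.
   Context: Let $X=(X_i)$ be i.i.d. Bernoulli with parameter $p\in S$ and $U=(U_i)$ i.i.d. uniform on $(0,1)$, independent of $X$. A (possibly randomized) Bernoulli factory for $f$ consists of measurable stopping functions $\tau_i(x_1,u_1;\dots;x_i,u_i)\in\{0,1\}$ and measurable output functions $\gamma_n(x_1,u_1;\dots;x_n,u_n)\in\{0,1\}$; $N=\min\{i:\tau_i(X_1,U_1;\dots;X_i,U_i)=1\}$ is assumed finite almost surely, and the output $Y=\gamma_N(X_1,U_1;\dots;X_N,U_N)$ satisfies $\Pr[Y=1]=f(p)$ for all $p\in S$. The factory is fast if for every $p\in S$ there exist $A>0$, $\beta<1$ with $\Pr[N>n]\le A\beta^n$ for all $n$. *)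

From Stdlib Require Import Reals Lra Lia Classical ClassicalEpsilon.
Open Scope R_scope.

(** Infimum of a set of reals (0 if the set is empty or unbounded below). *)
Definition Rinf (E : R -> Prop) : R :=
  match excluded_middle_informative
          (bound (fun y => E (- y)) /\ exists y, E (- y)) with
  | left H => - proj1_sig (completeness _ (proj1 H) (proj2 H))
  | right _ => 0
  end.

Fixpoint prodR (n : nat) (g : nat -> R) : R :=
  match n with O => 1 | Datatypes.S m => prodR m g * g m end.

(** Points of R^n are represented by u : nat -> R, only u 0 .. u (n-1) matter. *)
Definition in_unit_cube (n : nat) (u : nat -> R) : Prop :=
  forall i, (i < n)%nat -> 0 < u i < 1.

Definition box_vol (n : nat) (a b : nat -> R) : R := prodR n (fun i => b i - a i).

(** Values of sum of volumes of countable covers by closed boxes of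
    A ∩ (0,1)^n  (used k-th box iff c k = true). *)
Definition cover_values (n : nat) (A : (nat -> R) -> Prop) : R -> Prop :=
  fun s => exists (c : nat -> bool) (a b : nat -> nat -> R),
    (forall k i, a k i <= b k i) /\
    (forall u, in_unit_cube n u -> A u ->
       exists k, c k = true /\ forall i, (i < n)%nat -> a k i <= u i <= b k i) /\
    Un_cv (sum_f_R0 (fun k => if c k then box_vol n (a k) (b k) else 0)) s.

(** Lebesgue (outer) measure of A ∩ (0,1)^n, i.e. the law of (U_1,..,U_n). *)
Definition leb_measure (n : nat) (A : (nat -> R) -> Prop) : R :=
  Rinf (cover_values n A).

(** Borel subsets of R^n (as sets depending on the first n coordinates). *)
Inductive borel (n : nat) : ((nat -> R) -> Prop) -> Prop :=
| borel_box (a b : nat -> R) :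
    borel n (fun u => forall i, (i < n)%nat -> a i < u i < b i)
| borel_compl A : borel n A -> borel n (fun u => ~ A u)
| borel_union (F : nat -> (nat -> R) -> Prop) :
    (forall k, borel n (F k)) -> borel n (fun u => exists k, F k u)
| borel_ext A B : borel n A -> (forall u, A u <-> B u) -> borel n B.

(** A randomized factory: tau i x u (i >= 1) is the stopping function
    tau_i(x_1,u_1;...;x_i,u_i) and gamma n x u the output function
    gamma_n(x_1,u_1;...;x_n,u_n), where x_j = x (j-1), u_j = u (j-1). *)
Definition causal (g : nat -> (nat -> bool) -> (nat -> R) -> bool) : Prop :=
  forall i x x' u u', (forall j, (j < i)%nat -> x j = x' j /\ u j = u' j) ->
    g i x u = g i x' u'.

Definition measurable_fam (g : nat -> (nat -> bool) -> (nat -> R) -> bool) : Prop :=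
  forall i x, borel i (fun u => g i x u = true).

Definition weight (n : nat) (x : nat -> bool) (p : R) : R :=
  prodR n (fun i => if x i then p else 1 - p).

Definition bits (k : nat) : nat -> bool := fun i => Nat.testbit k i.

Definition sum_bits (n : nat) (F : (nat -> bool) -> R) : R :=
  sum_f_R0 (fun k => F (bits k)) (Nat.pow 2 n - 1).

(** Pr[E] for an event E determined by (X_1,U_1,...,X_n,U_n). *)
Definition prob (n : nat) (p : R) (E : (nat -> bool) -> (nat -> R) -> Prop) : R :=
  sum_bits n (fun x => weight n x p * leb_measure n (E x)).

Definition stops_at (tau : nat -> (nat -> bool) -> (nat -> R) -> bool)
  (n : nat) (x : nat -> bool) (u : nat -> R) : Prop :=
  (forall j, (1 <= j < n)%nat -> tau j x u = false) /\ tau n x u = true.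

Definition phi (tau gamma : nat -> (nat -> bool) -> (nat -> R) -> bool)
  (n : nat) (p : R) : R :=
  prob n p (fun x u => stops_at tau n x u /\ gamma n x u = true).

Definition tail (tau : nat -> (nat -> bool) -> (nat -> R) -> bool) (n : nat) (p : R) : R :=
  prob n p (fun x u => forall j, (1 <= j <= n)%nat -> tau j x u = false).

Definition bernoulli_factory (S : R -> Prop) (f : R -> R)
  (tau gamma : nat -> (nat -> bool) -> (nat -> R) -> bool) : Prop :=
  causal tau /\ causal gamma /\ measurable_fam tau /\ measurable_fam gamma /\
  (* N finite almost surely *)
  (forall p, S p -> Un_cv (fun n => tail tau n p) 0) /\
  (* Pr[Y = 1] = sum_{n>=1} Pr[N = n, Y = 1] = f p *)
  (forall p, S p -> Un_cv (sum_f_R0 (fun n => phi tau gamma (Datatypes.S n) p)) (f p)).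

Definition fast (S : R -> Prop) (tau : nat -> (nat -> bool) -> (nat -> R) -> bool) : Prop :=
  forall p, S p -> exists A beta, A > 0 /\ beta < 1 /\
    forall n, tail tau n p <= A * beta ^ n.

From Stdlib Require Import Reals Lra Lia ClassicalEpsilon.
From Stdlib Require List.
Open Scope R_scope.

(* phi_{n,1}(p) is a polynomial: a sum over bit patterns x of weights
   p^(#ones) (1-p)^(#zeros) times a fixed Lebesgue measure.  Differentiating a
   product of n factors, each at least p (1 - p), costs at most a factor
   n / (p (1 - p)), and {N = n + 1} is contained in {N > n}; hence
   |phi'_{n+1,1}(p)| <= (n + 1) Pr_p[N > n] / (p (1 - p)).  Moving the parameter
   from p to a nearby q multiplies every weight by at most r^n with r close to 1,
   so the geometric bound on Pr[N > n] at p extends to a neighbourhood of p, and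
   by compactness to [zeta, eta].  The Weierstrass M-test with the summable bound
   (n + 1) rho^n concludes. *)

Lemma prodR_ext n g h : (forall i, (i < n)%nat -> g i = h i) -> prodR n g = prodR n h.
Proof.
  induction n as [|n IH]; intros Hgh; simpl; [reflexivity|].
  rewrite IH, Hgh by (intros; try apply Hgh; lia). reflexivity.
Qed.

Lemma prodR_ge0 n g : (forall i, (i < n)%nat -> 0 <= g i) -> 0 <= prodR n g.
Proof.
  induction n as [|n IH]; intros Hg; simpl; [lra|].
  apply Rmult_le_pos; [apply IH; intros; apply Hg|apply Hg]; lia.
Qed.

Lemma prodR_1 n : prodR n (fun _ => 1) = 1.
Proof. induction n as [|n IH]; simpl; [|rewrite IH]; ring. Qed.

Lemma Rinf_spec (E : R -> Prop) :
  (exists s, E s) -> (exists m, forall s, E s -> m <= s) ->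
  (forall s, E s -> Rinf E <= s) /\ (forall l, (forall s, E s -> l <= s) -> l <= Rinf E).
Proof.
  intros [s0 Es0] [m Hm]. unfold Rinf.
  destruct excluded_middle_informative as [H|H].
  - destruct (completeness _ (proj1 H) (proj2 H)) as [M [HubM HlubM]]; simpl. split.
    + intros s Es. enough (-s <= M) by lra. apply HubM. rewrite Ropp_involutive. exact Es.
    + intros l Hl. enough (M <= -l) by lra.
      apply HlubM. intros y Ey. specialize (Hl _ Ey). lra.
  - exfalso. apply H. split.
    + exists (- m). intros y Ey. specialize (Hm _ Ey). lra.
    + exists (- s0). rewrite Ropp_involutive. exact Es0.
Qed.

Lemma cover_values_ge0 n A s : cover_values n A s -> 0 <= s.
Proof.
  intros (c & a & b & Hab & _ & Hcv).
  set (v := fun k => if c k then box_vol n (a k) (b k) else 0).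
  assert (Hv : forall k, 0 <= v k).
  { intros k. unfold v. destruct (c k); [|lra].
    apply prodR_ge0. intros i _. specialize (Hab k i). lra. }
  apply Rle_trans with (sum_f_R0 v 0); [apply cond_pos_sum | apply sum_incr]; assumption.
Qed.

Lemma cover_values_unit_cube n A : cover_values n A 1.
Proof.
  exists (fun k => Nat.eqb k 0), (fun _ _ => 0), (fun _ _ => 1). split; [|split].
  - intros; lra.
  - intros u Hu _. exists 0%nat. split; [reflexivity|].
    intros i Hi. specialize (Hu i Hi). lra.
  - assert (Hvol : box_vol n (fun _ => 0) (fun _ => 1) = 1).
    { unfold box_vol. transitivity (prodR n (fun _ => 1)); [|apply prodR_1].
      apply prodR_ext. intros; ring. }
    assert (Hsum : forall N, sum_f_R0 (fun k => if Nat.eqb k 0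
                   then box_vol n (fun _ => 0) (fun _ => 1) else 0) N = 1).
    { induction N as [|N IH]; simpl; [exact Hvol | rewrite IH; ring]. }
    intros eps Heps. exists 0%nat. intros N _.
    unfold Rdist. rewrite Hsum, Rminus_diag, Rabs_R0. exact Heps.
Qed.

Lemma leb_measure_spec n A :
  (forall s, cover_values n A s -> leb_measure n A <= s) /\
  (forall l, (forall s, cover_values n A s -> l <= s) -> l <= leb_measure n A).
Proof.
  apply Rinf_spec.
  - exists 1. apply cover_values_unit_cube.
  - exists 0. apply cover_values_ge0.
Qed.

Lemma leb_measure_ge0 n A : 0 <= leb_measure n A.
Proof. apply (proj2 (leb_measure_spec n A)), cover_values_ge0. Qed.

Lemma leb_measure_mono n (A B : (nat -> R) -> Prop) :
  (forall u, in_unit_cube n u -> A u -> B u) -> leb_measure n A <= leb_measure n B.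
Proof.
  intros HAB. apply (proj2 (leb_measure_spec n B)). intros s (c & a & b & Hab & Hcov & Hs).
  apply (proj1 (leb_measure_spec n A)). exists c, a, b. split; [|split]; auto.
Qed.

Lemma leb_measure_ext n (A B : (nat -> R) -> Prop) :
  (forall u, in_unit_cube n u -> (A u <-> B u)) -> leb_measure n A = leb_measure n B.
Proof.
  intros HAB. apply Rle_antisym; apply leb_measure_mono; intros u Hu; apply HAB, Hu.
Qed.

(* A cover of [A] in dimension [n] becomes one in dimension [n + 1] by
   extending every box by the factor [0, 1]. *)
Lemma leb_measure_succ_le n (A : (nat -> R) -> Prop) :
  leb_measure (S n) A <= leb_measure n A.
Proof.
  apply (proj2 (leb_measure_spec n A)). intros s (c & a & b & Hab & Hcov & Hs).
  apply (proj1 (leb_measure_spec (S n) A)).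
  exists c, (fun k i => if Nat.eqb i n then 0 else a k i),
            (fun k i => if Nat.eqb i n then 1 else b k i).
  split; [|split].
  - intros k i. destruct (Nat.eqb i n); [lra | apply Hab].
  - intros u Hu Au. destruct (Hcov u) as [k [Hk Hin]]; [intros i Hi; apply Hu; lia | exact Au|].
    exists k. split; [exact Hk|]. intros i Hi. destruct (Nat.eqb_spec i n) as [->|Hne].
    + specialize (Hu n Hi). lra.
    + apply Hin. lia.
  - refine (Un_cv_ext _ _ (fun N => sum_eq _ _ N _) s Hs). intros k _.
    destruct (c k); [|reflexivity]. unfold box_vol; simpl.
    rewrite Nat.eqb_refl, Rminus_0_r, Rmult_1_r. apply prodR_ext.
    intros i Hi. destruct (Nat.eqb_spec i n); [lia | reflexivity].
Qed.

Lemma bits_low k m : (k < 2 ^ m)%nat -> bits k m = false.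
Proof. intros Hk. apply (Nat.testbit_unique k m false k 0); [exact Hk | simpl; lia]. Qed.

Lemma bits_high k m : (k < 2 ^ m)%nat -> bits (2 ^ m + k) m = true.
Proof. intros Hk. apply (Nat.testbit_unique _ m true k 0); [exact Hk | simpl; lia]. Qed.

Lemma bits_high_low k m i : (k < 2 ^ m)%nat -> (i < m)%nat -> bits (2 ^ m + k) i = bits k i.
Proof.
  intros Hk Hi. unfold bits. rewrite <- (Nat.mod_pow2_bits_low _ m i Hi).
  replace (2 ^ m + k)%nat with (k + 1 * 2 ^ m)%nat by lia.
  rewrite Nat.Div0.mod_add, Nat.mod_small by exact Hk. reflexivity.
Qed.

Lemma weight_succ n x p : weight (S n) x p = weight n x p * (if x n then p else 1 - p).
Proof. reflexivity. Qed.

Lemma weight_ext n x x' p : (forall i, (i < n)%nat -> x i = x' i) -> weight n x p = weight n x' p.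
Proof. intros Hx. apply prodR_ext. intros i Hi. rewrite Hx by exact Hi. reflexivity. Qed.

Lemma weight_gt0 n x p : 0 < p < 1 -> 0 < weight n x p.
Proof.
  intros Hp. induction n as [|n IH]; [unfold weight; simpl; lra|].
  rewrite weight_succ. apply Rmult_lt_0_compat; [exact IH | destruct (x n); lra].
Qed.

(* Summing out the last coordinate: the [2 ^ (m + 1)] patterns are the [2 ^ m]
   patterns [bits k] followed by [0] and the patterns [bits (2 ^ m + k)]
   followed by [1], and the two weights add up to [weight m (bits k) p]. *)
Lemma sum_bits_weight_succ m p (H : (nat -> bool) -> R) :
  (forall x x', (forall i, (i < m)%nat -> x i = x' i) -> H x = H x') ->
  sum_bits (S m) (fun x => weight (S m) x p * H x) = sum_bits m (fun x => weight m x p * H x).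
Proof.
  intros HH. unfold sum_bits.
  assert (Hpos : (1 <= 2 ^ m)%nat) by (pose proof (Nat.pow_nonzero 2 m); lia).
  assert (Hlow : forall k, (k <= 2 ^ m - 1)%nat ->
            weight (S m) (bits k) p * H (bits k) = weight m (bits k) p * H (bits k) * (1 - p)).
  { intros k Hk. rewrite weight_succ, bits_low by lia. ring. }
  assert (Hhigh : forall k, (k <= 2 ^ m - 1)%nat ->
            weight (S m) (bits (S (2 ^ m - 1) + k)) p * H (bits (S (2 ^ m - 1) + k))
            = weight m (bits k) p * H (bits k) * p).
  { intros k Hk. replace (S (2 ^ m - 1) + k)%nat with (2 ^ m + k)%nat by lia.
    rewrite weight_succ, bits_high by lia.
    rewrite (weight_ext m _ (bits k)), (HH _ (bits k)) by (intros; apply bits_high_low; lia).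
    ring. }
  rewrite (tech2 _ (2 ^ m - 1) (2 ^ S m - 1)) by (simpl; lia).
  replace (2 ^ S m - 1 - S (2 ^ m - 1))%nat with (2 ^ m - 1)%nat by (simpl; lia).
  rewrite (sum_eq _ _ _ Hlow), (sum_eq _ _ _ Hhigh), <- plus_sum.
  apply sum_eq. intros; ring.
Qed.

Fixpoint dweight (n : nat) (x : nat -> bool) (p : R) : R :=
  match n with
  | O => 0
  | S m => dweight m x p * (if x m then p else 1 - p) + weight m x p * (if x m then 1 else -1)
  end.

Lemma derivable_pt_lim_weight n x p : derivable_pt_lim (weight n x) p (dweight n x p).
Proof.
  induction n as [|n IH]; simpl.
  - apply derivable_pt_lim_const.
  - change (weight (S n) x) with (mult_fct (weight n x) (fun q => if x n then q else 1 - q)).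
    apply derivable_pt_lim_mult; [exact IH|].
    destruct (x n).
    + apply derivable_pt_lim_id.
    + replace (-1) with (0 - 1) by ring.
      apply (derivable_pt_lim_minus (fct_cte 1) id);
        [apply derivable_pt_lim_const | apply derivable_pt_lim_id].
Qed.

(* Each factor of the weight is at least [p * (1 - p)], and differentiating
   one of the [n] factors replaces it by [+1] or [-1]. *)
Lemma dweight_abs_le n x p : 0 < p < 1 ->
  p * (1 - p) * Rabs (dweight n x p) <= INR n * weight n x p.
Proof.
  intros Hp. induction n as [|n IH].
  - simpl. rewrite Rabs_R0. lra.
  - simpl dweight. rewrite weight_succ, S_INR.
    set (c := if x n then p else 1 - p). set (s := if x n then 1 else -1).
    assert (Hc : p * (1 - p) <= c) by (unfold c; destruct (x n); nra).
    assert (Hs : Rabs s = 1) by (unfold s, Rabs; destruct (x n), Rcase_abs; lra).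
    pose proof (weight_gt0 n x p Hp) as Hw.
    pose proof (Rabs_triang (dweight n x p * c) (weight n x p * s)) as Htri.
    rewrite !Rabs_mult, Hs, (Rabs_pos_eq c), (Rabs_pos_eq (weight n x p)) in Htri
      by (unfold c in *; destruct (x n); lra).
    assert (0 < c) by nra.
    assert (p * (1 - p) * Rabs (dweight n x p) * c <= INR n * weight n x p * c)
      by (apply Rmult_le_compat_r; lra).
    assert (p * (1 - p) * weight n x p <= c * weight n x p) by (apply Rmult_le_compat_r; lra).
    assert (0 < p * (1 - p)) by nra.
    nra.
Qed.

Lemma weight_le_pow n x q p r : 0 < p < 1 -> 0 < q < 1 ->
  q <= r * p -> 1 - q <= r * (1 - p) -> weight n x q <= r ^ n * weight n x p.
Proof.
  intros Hp Hq Hqp Hqp'. induction n as [|n IH]; [unfold weight; simpl; lra|].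
  rewrite !weight_succ. simpl pow.
  pose proof (weight_gt0 n x q Hq).
  replace (r * r ^ n * (weight n x p * (if x n then p else 1 - p)))
    with ((r ^ n * weight n x p) * (r * (if x n then p else 1 - p))) by ring.
  apply Rmult_le_compat; [lra | destruct (x n); lra | exact IH | destruct (x n); lra].
Qed.

Definition dprob (n : nat) (p : R) (E : (nat -> bool) -> (nat -> R) -> Prop) : R :=
  sum_bits n (fun x => dweight n x p * leb_measure n (E x)).

Lemma derivable_pt_lim_sum_f_R0 (F dF : nat -> R -> R) N p :
  (forall k, derivable_pt_lim (F k) p (dF k p)) ->
  derivable_pt_lim (fun q => sum_f_R0 (fun k => F k q) N) p (sum_f_R0 (fun k => dF k p) N).
Proof.
  intros HF. induction N as [|N IH]; [apply HF|].
  apply (derivable_pt_lim_plus _ (F (S N))); [exact IH | apply HF].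
Qed.

Lemma derivable_pt_lim_prob n p E :
  derivable_pt_lim (fun q => prob n q E) p (dprob n p E).
Proof.
  unfold prob, dprob, sum_bits.
  apply (derivable_pt_lim_sum_f_R0 (fun k q => weight n (bits k) q * leb_measure n (E (bits k)))
                                   (fun k q => dweight n (bits k) q * leb_measure n (E (bits k)))).
  intros k. rewrite <- (Rplus_0_r (_ * _)), <- (Rmult_0_r (weight n (bits k) p)).
  apply (derivable_pt_lim_mult (weight n (bits k)) (fct_cte _));
    [apply derivable_pt_lim_weight | apply derivable_pt_lim_const].
Qed.

Lemma prob_ge0 n p E : 0 < p < 1 -> 0 <= prob n p E.
Proof.
  intros Hp. apply cond_pos_sum. intros k.
  apply Rmult_le_pos; [apply Rlt_le, weight_gt0, Hp | apply leb_measure_ge0].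
Qed.

Lemma dprob_abs_le n p E : 0 < p < 1 ->
  p * (1 - p) * Rabs (dprob n p E) <= INR n * prob n p E.
Proof.
  intros Hp. unfold dprob, prob, sum_bits.
  eapply Rle_trans; [apply Rmult_le_compat_l; [nra | apply Rsum_abs]|].
  rewrite !scal_sum. apply sum_Rle. intros k _.
  rewrite Rabs_mult, (Rabs_pos_eq (leb_measure _ _)) by apply leb_measure_ge0.
  pose proof (dweight_abs_le n (bits k) p Hp). pose proof (leb_measure_ge0 n (E (bits k))).
  nra.
Qed.

Lemma prob_le_pow n q p r E : 0 < p < 1 -> 0 < q < 1 ->
  q <= r * p -> 1 - q <= r * (1 - p) -> prob n q E <= r ^ n * prob n p E.
Proof.
  intros Hp Hq Hqp Hqp'. unfold prob, sum_bits. rewrite scal_sum. apply sum_Rle. intros k _.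
  pose proof (leb_measure_ge0 n (E (bits k))).
  pose proof (weight_le_pow n (bits k) q p r Hp Hq Hqp Hqp'). nra.
Qed.

Lemma prob_succ_le m p (E F : (nat -> bool) -> (nat -> R) -> Prop) : 0 < p < 1 ->
  (forall x u, E x u -> F x u) ->
  (forall x x' u, (forall i, (i < m)%nat -> x i = x' i) -> F x u -> F x' u) ->
  prob (S m) p E <= prob m p F.
Proof.
  intros Hp HEF HF. unfold prob.
  rewrite <- (sum_bits_weight_succ m p (fun x => leb_measure m (F x))).
  2:{ intros x x' Hx. apply leb_measure_ext. intros u _.
      split; apply HF; intros i Hi; [|symmetry]; apply Hx, Hi. }
  apply sum_Rle. intros k _. apply Rmult_le_compat_l; [apply Rlt_le, weight_gt0, Hp|].
  eapply Rle_trans; [|apply leb_measure_succ_le].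
  apply leb_measure_mono. intros u _. apply HEF.
Qed.

Lemma prob_geometric_near (E : nat -> (nat -> bool) -> (nat -> R) -> Prop) p A beta :
  0 < p < 1 -> A > 0 -> beta < 1 -> (forall n, prob n p (E n) <= A * beta ^ n) ->
  exists d C rho, 0 < d /\ 0 <= C /\ 0 <= rho < 1 /\
    forall q, 0 < q < 1 -> Rabs (q - p) < d -> forall n, prob n q (E n) <= C * rho ^ n.
Proof.
  intros Hp HA Hbeta Hgeo.
  assert (Hbeta0 : 0 <= beta).
  { pose proof (Hgeo 1%nat). pose proof (prob_ge0 1 p (E 1%nat) Hp). simpl in *. nra. }
  set (b := Rmax beta (1 / 2)).
  assert (Hb : beta <= b /\ 1 / 2 <= b < 1).
  { split; [apply Rmax_l | split; [apply Rmax_r | apply Rmax_lub_lt; lra]]. }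
  set (r := (1 + b) / (2 * b)).
  assert (Hr : 1 < r) by (unfold r; apply (Rmult_lt_reg_r (2 * b)); field_simplify; lra).
  assert (Hrb : r * b = (1 + b) / 2) by (unfold r; field; lra).
  set (m := Rmin p (1 - p)).
  assert (Hm : 0 < m <= p /\ m <= 1 - p).
  { split; [split; [apply Rmin_glb_lt; lra | apply Rmin_l] | apply Rmin_r]. }
  exists (m * (r - 1)), A, ((1 + b) / 2).
  split; [nra | split; [lra | split; [lra|]]].
  intros q Hq Hqp n.
  apply Rabs_def2 in Hqp.
  eapply Rle_trans; [apply (prob_le_pow n q p r); [exact Hp | exact Hq | nra | nra]|].
  eapply Rle_trans; [apply Rmult_le_compat_l; [apply pow_le; lra | apply Hgeo]|].
  rewrite <- Hrb, Rpow_mult_distr.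
  replace (r ^ n * (A * beta ^ n)) with (A * (r ^ n * beta ^ n)) by ring.
  apply Rmult_le_compat_l; [lra|]. apply Rmult_le_compat_l; [apply pow_le; lra|].
  apply pow_incr. lra.
Qed.

Lemma geometric_bound_mono (h : R) C rho C' rho' n : 0 <= C -> 0 <= rho ->
  C <= C' -> rho <= rho' -> h <= C * rho ^ n -> h <= C' * rho' ^ n.
Proof.
  intros HC Hrho HCC' Hrr' Hh. eapply Rle_trans; [exact Hh|].
  apply Rmult_le_compat; [exact HC | apply pow_le, Hrho | exact HCC' | apply pow_incr; lra].
Qed.

Lemma geometric_bound_list (h : nat -> R -> R) (A : R -> R -> Prop) (l : list R) :
  (forall x, List.In x l -> exists C rho, 0 <= C /\ 0 <= rho < 1 /\
     forall y, A x y -> forall n, h n y <= C * rho ^ n) ->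
  exists C rho, 0 <= C /\ 0 < rho < 1 /\
     forall x y, List.In x l -> A x y -> forall n, h n y <= C * rho ^ n.
Proof.
  induction l as [|x l IH]; intros Hl.
  - exists 0, (1 / 2). split; [lra | split; [lra|]]. intros x y [].
  - destruct (Hl x (or_introl eq_refl)) as (C1 & rho1 & HC1 & Hrho1 & H1).
    destruct IH as (C2 & rho2 & HC2 & Hrho2 & H2); [intros; apply Hl; right; assumption|].
    exists (Rmax C1 C2), (Rmax rho1 rho2).
    split; [apply (Rle_trans _ C1); [exact HC1 | apply Rmax_l]|].
    split; [split; [apply (Rlt_le_trans _ rho2); [lra | apply Rmax_r] | apply Rmax_lub_lt; lra]|].
    intros x' y [<-|Hx'] Hy n.
    + apply (geometric_bound_mono _ C1 rho1); [lra | lra | apply Rmax_l | apply Rmax_l |].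
      apply H1, Hy.
    + apply (geometric_bound_mono _ C2 rho2); [lra | lra | apply Rmax_r | apply Rmax_r |].
      apply (H2 x'); assumption.
Qed.

(* Borel-Lebesgue: finitely many of the neighbourhoods given by the
   hypothesis cover [a, b], and the worst of their finitely many constants
   works everywhere. *)
Lemma geometric_bound_compact (h : nat -> R -> R) a b :
  (forall x, a <= x <= b -> exists d C rho, 0 < d /\ 0 <= C /\ 0 <= rho < 1 /\
     forall y, a <= y <= b -> Rabs (y - x) < d -> forall n, h n y <= C * rho ^ n) ->
  exists C rho, 0 <= C /\ 0 < rho < 1 /\
     forall y, a <= y <= b -> forall n, h n y <= C * rho ^ n.
Proof.
  intros Hloc.
  set (good := fun x d => exists C rho, 0 < d /\ 0 <= C /\ 0 <= rho < 1 /\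
     forall y, a <= y <= b -> Rabs (y - x) < d -> forall n, h n y <= C * rho ^ n).
  set (radius := fun x => epsilon (inhabits 0) (good x)).
  assert (Hradius : forall x, a <= x <= b -> good x (radius x)).
  { intros x Hx. apply epsilon_spec.
    destruct (Hloc x Hx) as (d & HC). exists d. exact HC. }
  set (nbhd := fun x y => a <= x <= b /\ Rabs (y - x) < radius x).
  assert (Hind : forall x, (exists y, nbhd x y) -> a <= x <= b) by (intros x [y [Hx _]]; exact Hx).
  destruct (compact_P3 a b (mkfamily (fun x => a <= x <= b) nbhd Hind)) as [D [Hcov [l Hl]]].
  { split.
    - intros y Hy. exists y. split; [exact Hy|].
      rewrite Rminus_diag, Rabs_R0. destruct (Hradius y Hy) as (C & rho & Hd & _). exact Hd.
    - intros x y [Hx Hy]. simpl in Hy.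
      assert (Hgap : 0 < radius x - Rabs (y - x)) by lra.
      exists (mkposreal _ Hgap). intros z Hz. unfold disc in Hz; simpl in Hz.
      split; [exact Hx|].
      replace (z - x) with ((z - y) + (y - x)) by ring.
      eapply Rle_lt_trans; [apply Rabs_triang | lra]. }
  destruct (geometric_bound_list h (fun x y => a <= y <= b /\ nbhd x y) l)
    as (C & rho & HC & Hrho & Hbound).
  { intros x Hx. apply Hl in Hx. destruct Hx as [Hx _].
    destruct (Hradius x Hx) as (C & rho & _ & HC & Hrho & Hbound).
    exists C, rho. split; [exact HC | split; [exact Hrho|]].
    intros y [Hy [_ Hyx]]. apply Hbound; assumption. }
  exists C, rho. split; [exact HC | split; [exact Hrho|]].
  intros y Hy. destruct (Hcov y Hy) as [x [Hxy HDx]].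
  apply (Hbound x); [apply Hl; split; [apply Hxy | exact HDx] | split; [exact Hy | exact Hxy]].
Qed.

Definition dphi (tau gamma : nat -> (nat -> bool) -> (nat -> R) -> bool) (n : nat) (p : R) : R :=
  dprob n p (fun x u => stops_at tau n x u /\ gamma n x u = true).

(* Stopping at time [m + 1] implies not stopping before: [{N = m + 1} ⊆ {N > m}]. *)
Lemma dphi_succ_abs_le tau gamma m p : causal tau -> 0 < p < 1 ->
  p * (1 - p) * Rabs (dphi tau gamma (S m) p) <= INR (S m) * tail tau m p.
Proof.
  intros Hcausal Hp. eapply Rle_trans; [apply dprob_abs_le, Hp|].
  apply Rmult_le_compat_l; [apply pos_INR|].
  apply prob_succ_le; [exact Hp | |].
  - intros x u [[Hbefore _] _] j Hj. apply Hbefore. lia.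
  - intros x x' u Hx Hnot j Hj. rewrite <- (Hnot j Hj). apply Hcausal.
    intros i Hi. split; [symmetry; apply Hx; lia | reflexivity].
Qed.

Lemma tail_geometric_uniform (S : R -> Prop) tau zeta eta :
  fast S tau -> (forall p, S p -> 0 < p < 1) -> (forall p, zeta <= p <= eta -> S p) ->
  exists C rho, 0 <= C /\ 0 < rho < 1 /\
    forall q, zeta <= q <= eta -> forall n, tail tau n q <= C * rho ^ n.
Proof.
  intros Hfast HS Hsub. apply (geometric_bound_compact (fun n q => tail tau n q)).
  intros x Hx. destruct (Hfast x (Hsub x Hx)) as (A & beta & HA & Hbeta & Hgeo).
  destruct (prob_geometric_near
              (fun n x u => forall j, (1 <= j <= n)%nat -> tau j x u = false) x A beta)
    as (d & C & rho & Hd & HC & Hrho & Hnear);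
    [apply HS, Hsub, Hx | exact HA | exact Hbeta | exact Hgeo |].
  exists d, C, rho. split; [exact Hd | split; [exact HC | split; [exact Hrho|]]].
  intros y Hy Hyx. apply Hnear; [apply HS, Hsub, Hy | exact Hyx].
Qed.

Lemma dphi_succ_geometric_uniform (S : R -> Prop) tau gamma zeta eta :
  causal tau -> fast S tau -> (forall p, S p -> 0 < p < 1) ->
  zeta <= eta -> (forall p, zeta <= p <= eta -> S p) ->
  exists K rho, 0 <= K /\ 0 < rho < 1 /\ forall q k, zeta <= q <= eta ->
    Rabs (dphi tau gamma (Datatypes.S k) q) <= K * (INR (Datatypes.S k) * rho ^ k).
Proof.
  intros Hcausal Hfast HS Hze Hsub.
  destruct (tail_geometric_uniform S tau zeta eta Hfast HS Hsub) as (C & rho & HC & Hrho & Htail).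
  pose proof (HS zeta (Hsub zeta ltac:(lra))). pose proof (HS eta (Hsub eta ltac:(lra))).
  assert (Hmin : 0 < zeta * (1 - eta)) by nra.
  exists (C / (zeta * (1 - eta))), rho.
  split; [apply Rmult_le_pos; [exact HC | apply Rlt_le, Rinv_0_lt_compat, Hmin]|].
  split; [exact Hrho|]. intros q k Hq.
  assert (Hq01 : 0 < q < 1) by lra.
  assert (Hqq : zeta * (1 - eta) <= q * (1 - q)) by (apply Rmult_le_compat; lra).
  pose proof (dphi_succ_abs_le tau gamma k q Hcausal Hq01) as Hd.
  pose proof (Htail q Hq k) as Ht. pose proof (prob_ge0 k q _ Hq01 : 0 <= tail tau k q).
  pose proof (pos_INR (Datatypes.S k)). pose proof (Rabs_pos (dphi tau gamma (Datatypes.S k) q)).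
  apply (Rmult_le_reg_l (zeta * (1 - eta))); [exact Hmin|].
  replace (zeta * (1 - eta) * (C / (zeta * (1 - eta)) * (INR (Datatypes.S k) * rho ^ k)))
    with (INR (Datatypes.S k) * (C * rho ^ k)) by (field; lra).
  assert (INR (Datatypes.S k) * tail tau k q <= INR (Datatypes.S k) * (C * rho ^ k))
    by (apply Rmult_le_compat_l; assumption).
  assert (zeta * (1 - eta) * Rabs (dphi tau gamma (Datatypes.S k) q)
          <= q * (1 - q) * Rabs (dphi tau gamma (Datatypes.S k) q))
    by (apply Rmult_le_compat_r; assumption).
  lra.
Qed.

Lemma ex_series_succ_pow rho : 0 < rho < 1 ->
  {l | Un_cv (sum_f_R0 (fun k => INR (S k) * rho ^ k)) l}.
Proof.
  intros Hrho. apply (Alembert_C4 _ rho); [lra| |].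
  - intros n. apply Rmult_lt_0_compat; [apply lt_0_INR; lia | apply pow_lt; lra].
  - intros eps Heps. destruct (INR_archimed eps rho Heps) as [N HN]. exists N.
    intros n Hn. unfold Rdist.
    assert (HSn : INR N <= INR (S n)) by (apply le_INR; lia).
    assert (Hratio : INR (S (S n)) * rho ^ S n / (INR (S n) * rho ^ n) = rho + rho / INR (S n)).
    { rewrite (S_INR (S n)). simpl pow. field.
      split; [apply not_0_INR; lia | apply pow_nonzero; lra]. }
    assert (Hsmall : 0 < rho / INR (S n) < eps).
    { split; [apply Rdiv_lt_0_compat; [lra | apply lt_0_INR; lia]|].
      apply (Rmult_lt_reg_r (INR (S n))); [apply lt_0_INR; lia|].
      unfold Rdiv. rewrite Rmult_assoc, Rinv_l by (apply not_0_INR; lia).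
      assert (eps * INR N <= eps * INR (S n)) by (apply Rmult_le_compat_l; lra). lra. }
    rewrite Hratio, (Rabs_pos_eq (rho + _)) by lra.
    replace (rho + rho / INR (S n) - rho) with (rho / INR (S n)) by ring.
    rewrite Rabs_pos_eq; lra.
Qed.

(* Weierstrass M-test on an arbitrary set [D]; the terms are extended by [0]
   outside [D] so that the library's normal-convergence results apply. *)
Lemma series_cvu_on (D : R -> Prop) (u : nat -> R -> R) (B : nat -> R) lB :
  (forall k, 0 <= B k) -> Un_cv (sum_f_R0 B) lB ->
  (forall k p, D p -> Rabs (u k p) <= B k) ->
  exists g : R -> R, forall eps, eps > 0 -> exists M : nat,
    forall m p, (M <= m)%nat -> D p -> Rabs (sum_f_R0 (fun k => u k p) m - g p) < eps.
Proof.
  intros HB0 HB HuB.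
  set (fn := fun k p => if excluded_middle_informative (D p) then u k p else 0).
  assert (HfnB : forall k p, Rabs (fn k p) <= B k).
  { intros k p. unfold fn. destruct excluded_middle_informative as [Hp|_].
    - apply HuB, Hp.
    - rewrite Rabs_R0. apply HB0. }
  assert (Hnormal : CVN_R fn).
  { intros r. exists B, lB. split; [|intros n y _; apply HfnB].
    refine (Un_cv_ext _ _ (fun N => sum_eq _ _ N _) lB HB).
    intros k _. symmetry. apply Rabs_pos_eq, HB0. }
  set (cv := CVN_R_CVS fn Hnormal).
  exists (SFL fn cv). intros eps Heps.
  destruct (HB eps Heps) as [M HM]. exists M. intros m p Hm Hp.
  replace (sum_f_R0 (fun k => u k p) m) with (SP fn m p).
  2:{ apply sum_eq. intros k _. unfold fn. destruct excluded_middle_informative; tauto. }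
  rewrite Rabs_minus_sym.
  eapply Rle_lt_trans; [apply (sum_maj1 fn B p _ lB m (proj2_sig (cv p)) HB (fun k => HfnB k p))|].
  specialize (HM m Hm). unfold Rdist in HM. apply Rabs_def2 in HM. lra.
Qed.

Theorem lemma1 (S : R -> Prop) (f : R -> R)
  (tau gamma : nat -> (nat -> bool) -> (nat -> R) -> bool) :
  open_set S ->
  (forall p, S p -> 0 < p < 1) ->
  (forall p, S p -> 0 < f p < 1) ->
  (forall p, S p -> exists l, derivable_pt_lim f p l) ->
  bernoulli_factory S f tau gamma ->
  fast S tau ->
  (forall n p, (1 <= n)%nat -> S p -> exists l, derivable_pt_lim (phi tau gamma n) p l) /\
  (exists dphi : nat -> R -> R,
     (forall n p, (1 <= n)%nat -> S p -> derivable_pt_lim (phi tau gamma n) p (dphi n p)) /\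
     forall zeta eta, zeta <= eta -> (forall p, zeta <= p <= eta -> S p) ->
       exists g : R -> R, forall eps, eps > 0 -> exists M : nat,
         forall m p, (M <= m)%nat -> zeta <= p <= eta ->
           Rabs (sum_f_R0 (fun k => dphi (Datatypes.S k) p) m - g p) < eps).
Proof.
  intros _ HS _ _ [Hcausal _] Hfast.
  split; [intros n p _ _; eexists; apply derivable_pt_lim_prob|].
  exists (dphi tau gamma). split; [intros n p _ _; apply derivable_pt_lim_prob|].
  intros zeta eta Hze Hsub.
  destruct (dphi_succ_geometric_uniform S tau gamma zeta eta Hcausal Hfast HS Hze Hsub)
    as (K & rho & HK & Hrho & Hbound).
  destruct (ex_series_succ_pow rho Hrho) as [l Hl].
  apply (series_cvu_on _ _ (fun k => K * (INR (Datatypes.S k) * rho ^ k)) (K * l)).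
  - intros k. apply Rmult_le_pos; [exact HK|].
    apply Rmult_le_pos; [apply pos_INR | apply pow_le; lra].
  - assert (HK_cv : Un_cv (fun _ => K) K).
    { intros e He. exists 0%nat. intros. unfold Rdist. rewrite Rminus_diag, Rabs_R0. exact He. }
    refine (Un_cv_ext _ _ _ _ (CV_mult _ _ _ _ HK_cv Hl)).
    intros N. rewrite scal_sum. apply sum_eq. intros; ring.
  - intros k p Hp. apply Hbound, Hp.
Qed.
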